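(* Let $A\in\mathbb{R}^{M\times M}$ be symmetric positive definite with eigenvalues $0<\phi_1\le\phi_2\le\cdots\le\phi_M$. Let $b,k_{n_1},k_{n_2},k_{n_3}>0$ with $k_{n_2}<k_{n_1}/\sqrt{\phi_M}$, and define $$Q=\mathrm{sym}\left\{\begin{pmatrix}k_{n_1}A+k_{n_3}I&k_{n_2}A&0\\k_{n_2}A&k_{n_1}I&0\\0&0&I\end{pmatrix}\begin{pmatrix}0&I&0\\-A&-bI&bI\\0&0&-A\end{pmatrix}\right\},$$ where $\mathrm{sym}\{X\}=\frac12(X+X^T)$ and $I=I_M$. If moreover $$b<\phi_1,\quad k_{n_1}<\frac{2\phi_1}{b},\quad k_{n_2}<\min\Big\{\frac{bk_{n_1}}{\phi_M(2+b)},\ \frac2b-\frac{k_{n_1}}{\phi_1}\Big\},\quad k_{n_3}<\frac{bk_{n_2}\phi_1}{2},$$ then all $3M$ eigenvalues of $Q$ are negative, and each is bounded above by the maximum of the following negative quantities: $$k_{n_2}\phi_1(b-\phi_1),\qquad k_{n_2}\phi_M\Big(1+\frac b2\Big)-\frac{bk_{n_1}}2,\qquad \phi_1\Big(\frac{bk_{n_2}}2-1\Big)+\frac{bk_{n_1}}2.$$ *)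

(* matrices over an abstract real closed field R
   (covers the concrete reals). *)
From mathcomp Require Import all_boot all_order all_algebra.
Set Implicit Arguments. Unset Strict Implicit. Unset Printing Implicit Defensive.
Import Order.TTheory GRing.Theory Num.Theory.
Local Open Scope ring_scope.

Definition blk3 (R : nzRingType) (m : nat)
  (a11 a12 a13 a21 a22 a23 a31 a32 a33 : 'M[R]_m) : 'M[R]_(m + m + m) :=
  block_mx (block_mx a11 a12 a21 a22) (col_mx a13 a23)
           (row_mx a31 a32) a33.

Definition symmx (R : fieldType) (n : nat) (X : 'M[R]_n) : 'M[R]_n :=
  2^-1 *: (X + X^T).

Definition posdef (R : numFieldType) (n : nat) (A : 'M[R]_n) : Prop :=
  forall x : 'cV[R]_n, x != 0 -> 0 < (x^T *m A *m x) 0 0.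

Definition Qmat (R : fieldType) (M : nat) (A : 'M[R]_M) (b k1 k2 k3 : R)
  : 'M[R]_(M + M + M) :=
  symmx (blk3 (k1 *: A + k3%:M) (k2 *: A) 0
              (k2 *: A) (k1%:M) 0
              0 0 1%:M
         *m
         blk3 0 1%:M 0
              (- A) (- b%:M) (b%:M)
              0 0 (- A)).

(* If [v *m Q = l *: v] with [v != 0] then [l |v|^2 = v Q v^T], so it is enough
   to bound the quadratic form of Q by [m |v|^2], m the maximum of the three
   quantities.  Writing [v = (x, y, z)], the difference [m |v|^2 - v Q v^T] is an
   explicit combination, with nonnegative coefficients, of the squares [|x|^2],
   [|y|^2], [|z|^2], [|x + y|^2], [|y - z|^2], [|x A - phi1 x|^2] and of the Rayleigh gaps
   [u A u^T - phi1 |u|^2] and [phiM |u|^2 - u A u^T].  The Rayleigh inequalities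
   follow from the spectral theorem applied to A seen as a hermitian matrix over
   [R[i]]. *)

From mathcomp Require Import all_boot all_order all_algebra.
From mathcomp Require Import complex.
From mathcomp Require Import ring lra.
Set Implicit Arguments. Unset Strict Implicit. Unset Printing Implicit Defensive.
Import Order.TTheory GRing.Theory Num.Theory.
Local Open Scope ring_scope.
Local Open Scope sesquilinear_scope.

Local Notation dotv u v := ((u *m v^T) 0 0).
Local Notation bform B u v := ((u *m B *m v^T) 0 0).

Section SpectralForm.
Variable C : numClosedFieldType.

Lemma mulmx_trmxC_sum n (w : 'rV[C]_n) : (w *m w^t*) 0 0 = \sum_j `|w 0 j| ^+ 2.
Proof. by rewrite mxE; apply: eq_bigr => j _; rewrite !mxE normCK. Qed.

Lemma mulmx_diag_trmxC_sum n (d w : 'rV[C]_n) :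
  (w *m diag_mx d *m w^t*) 0 0 = \sum_j d 0 j * `|w 0 j| ^+ 2.
Proof.
rewrite mul_mx_diag mxE; apply: eq_bigr => j _.
by rewrite !mxE normCK mulrCA mulrA.
Qed.

Lemma eigenvalue_spectral_diag n (A : 'M[C]_n) j :
  A \is normalmx -> eigenvalue A (spectral_diag A 0 j).
Proof.
move=> /orthomx_spectralP A_spec; set P := spectralmx A in A_spec.
have PA : P *m A = diag_mx (spectral_diag A) *m P.
  by rewrite {1}A_spec !mulmxA mulmxV ?spectral_unit // mul1mx.
apply/eigenvalueP; exists (row j P).
  by rewrite -row_mul PA mul_diag_mx; apply/rowP => k; rewrite !mxE.
apply: contra_neq (oner_neq0 C) => Pj0.
move/row_unitarymxP: (spectral_unitarymx A) => /(_ j j).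
by rewrite -/P Pj0 dotmxE mul0mx mxE eqxx.
Qed.

Lemma normalmx_spectral_forms n (A : 'M[C]_n) (u : 'rV_n) : A \is normalmx ->
  let w := u *m (spectralmx A)^t* in
  (u *m A *m u^t*) 0 0 = \sum_j spectral_diag A 0 j * `|w 0 j| ^+ 2
  /\ (u *m u^t*) 0 0 = \sum_j `|w 0 j| ^+ 2.
Proof.
move=> /orthomx_spectralP A_spec w.
have iP := invmx_unitary (spectral_unitarymx A).
have wt : w^t* = spectralmx A *m u^t* by rewrite trmx_mul map_mxM trmxCK.
split; first by rewrite -mulmx_diag_trmxC_sum wt {1}A_spec iP !mulmxA.
by rewrite -(mulmx_trmxC_sum w) wt /w -iP !mulmxA mulmxKV ?spectral_unit.
Qed.
End SpectralForm.

Section Rayleigh.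
Variable R : rcfType.
Local Notation toC := (real_complex R).

Lemma rayleigh_bounds n (A : 'M[R]_n) c d : A^T = A ->
  (forall a, eigenvalue A a -> c <= a <= d) -> forall x : 'rV_n,
  c * dotv x x <= bform A x x <= d * dotv x x.
Proof.
move=> sA eA x; set AC := map_mx toC A.
have realAC : AC \is a realmx.
  by apply/mxOverP => i j; rewrite mxE; apply/complex_realP; exists (A i j).
have hermAC : AC \is hermsymmx.
  apply: realsym_hermsym realAC; apply/is_hermitianmxP.
  by rewrite expr0 scale1r; apply/matrixP => i j; rewrite !mxE -{1}sA mxE.
have normAC := hermitian_normalmx hermAC.
have diag_eig j : exists2 r, spectral_diag AC 0 j = toC r & c <= r <= d.
  have /mxOverP/(_ 0 j)/complex_realP[r Dr] := hermitian_spectral_diag_real hermAC.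
  exists r => //; apply: eA; rewrite -(eigenvalue_map (real_complex R)).
  by have := eigenvalue_spectral_diag j normAC; rewrite Dr.
have xCt : (map_mx toC x)^t* = map_mx toC x^T.
  by apply/matrixP => i j; rewrite !mxE; apply: conjc_real.
have [formE normE] := normalmx_spectral_forms (map_mx toC x) normAC; rewrite xCt in formE normE.
rewrite -!map_mxM mxE in formE; rewrite -map_mxM mxE in normE.
rewrite -!lecR !rmorphM /= formE normE !mulr_sumr.
apply/andP; split; apply: ler_sum => j _; rewrite ler_wpM2r ?exprn_ge0 //;
  by have [r -> /andP[cr rd]] := diag_eig j; rewrite lecR.
Qed.
End Rayleigh.

Section Forms.
Variable R : realFieldType.

Lemma mx11_trmx (X : 'M[R]_1) : X^T 0 0 = X 0 0. Proof. by rewrite mxE. Qed.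
Lemma mx11D (X Y : 'M[R]_1) : (X + Y) 0 0 = X 0 0 + Y 0 0. Proof. by rewrite mxE. Qed.
Lemma mx11N (X : 'M[R]_1) : (- X) 0 0 = - X 0 0. Proof. by rewrite mxE. Qed.
Lemma mx11Z a (X : 'M[R]_1) : (a *: X) 0 0 = a * X 0 0. Proof. by rewrite mxE. Qed.

Lemma bformC n (B : 'M[R]_n) (u v : 'rV_n) : B^T = B -> bform B u v = bform B v u.
Proof. by move=> sB; rewrite -mx11_trmx !trmx_mul trmxK sB mulmxA. Qed.

Lemma bformDD n (B : 'M[R]_n) (u w : 'rV_n) : B^T = B ->
  bform B (u + w) (u + w) = bform B u u + 2 * bform B u w + bform B w w.
Proof.
move=> sB; rewrite linearD /= !(mulmxDl, mulmxDr) !mx11D (bformC u w sB).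
ring.
Qed.

Lemma bformBB n (B : 'M[R]_n) (u w : 'rV_n) : B^T = B ->
  bform B (u - w) (u - w) = bform B u u - 2 * bform B u w + bform B w w.
Proof.
move=> sB; rewrite linearB /= !(mulmxBl, mulmxBr) !(mx11D, mx11N) (bformC u w sB).
ring.
Qed.

Lemma dotvDD n (u w : 'rV[R]_n) :
  dotv (u + w) (u + w) = dotv u u + 2 * dotv u w + dotv w w.
Proof. by have := bformDD u w (trmx1 R n); rewrite !mulmx1. Qed.

Lemma dotvBB n (u w : 'rV[R]_n) :
  dotv (u - w) (u - w) = dotv u u - 2 * dotv u w + dotv w w.
Proof. by have := bformBB u w (trmx1 R n); rewrite !mulmx1. Qed.

Lemma dotv_ge0 n (u : 'rV[R]_n) : 0 <= dotv u u.
Proof. by rewrite mxE; apply: sumr_ge0 => i _; rewrite !mxE -expr2 sqr_ge0. Qed.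

Lemma dotv_gt0 n (u : 'rV[R]_n) : u != 0 -> 0 < dotv u u.
Proof.
move=> u_neq0; rewrite lt_def dotv_ge0 andbT; apply: contra u_neq0.
rewrite mxE; under eq_bigr do rewrite mxE -expr2; move=> /eqP u0.
apply/eqP/rowP => i; apply/eqP; rewrite mxE -sqrf_eq0.
by rewrite (psumr_eq0P (fun j _ => sqr_ge0 (u 0 j)) u0).
Qed.

Lemma bform_symmx n (X : 'M[R]_n) (v : 'rV_n) : bform (symmx X) v v = bform X v v.
Proof.
rewrite /symmx -scalemxAr -scalemxAl mx11Z mulmxDr mulmxDl mx11D.
rewrite -[bform X^T v v]mx11_trmx !trmx_mul !trmxK mulmxA.
by field.
Qed.

Lemma bform_Qmat n (A : 'M[R]_n) b k1 k2 k3 (x y z : 'rV_n) : A^T = A ->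
  let v := row_mx (row_mx x y) z in
  bform (Qmat A b k1 k2 k3) v v =
    k3 * dotv x y - b * k2 * bform A x y + k2 * bform A y y
    - k2 * dotv (x *m A) (x *m A) + b * k2 * bform A x z
    - b * k1 * dotv y y + b * k1 * dotv y z - bform A z z.
Proof.
move=> sA v; rewrite bform_symmx /blk3 /v !tr_row_mx trmx_mul sA.
rewrite !mulmxA !mul_row_block !mul_row_col !mul_mx_row.
rewrite !(mulmx0, mul0mx, addr0, add0r, mulmx1, mul1mx, row_mx0,
          mul_row_block, mul_row_col, mul_mx_row).
rewrite !(mulmxDl, mulmxDr, mulmxN, mulNmx, mul_mx_scalar, mulmxBl, mulmxBr).
rewrite -!(scalemxAl, scalemxAr) ?mulmxA !(mx11D, mx11N, mx11Z) (bformC x y sA).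
ring.
Qed.
End Forms.

Section QmatBound.
Variables (R : realFieldType) (n : nat) (A : 'M[R]_n) (p1 pM b k1 k2 k3 m : R).
Hypothesis sA : A^T = A.
Hypothesis rayleighA : forall u : 'rV_n,
  p1 * dotv u u <= bform A u u <= pM * dotv u u.
Hypotheses (b_ge0 : 0 <= b) (k1_ge0 : 0 <= k1) (k2_ge0 : 0 <= k2) (k3_ge0 : 0 <= k3).
Hypotheses (p1_ge0 : 0 <= p1) (b_le_2p1 : b <= 2 * p1).
Hypotheses (k3_le : k3 <= b * k2 * p1) (k2b_le2 : k2 * b <= 2).
Hypothesis m_ge1 : k2 * p1 * (b - p1) <= m.
Hypothesis m_ge2 : k2 * pM * (1 + b / 2) - b * k1 / 2 <= m.
Hypothesis m_ge3 : p1 * (b * k2 / 2 - 1) + b * k1 / 2 <= m.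

Lemma bform_Qmat_le (v : 'rV[R]_(n + n + n)) :
  bform (Qmat A b k1 k2 k3) v v <= m * dotv v v.
Proof.
set x := lsubmx (lsubmx v); set y := rsubmx (lsubmx v); set z := rsubmx v.
have gap (u : 'rV_n) : 0 <= bform A u u - p1 * dotv u u.
  by rewrite subr_ge0; case/andP: (rayleighA u).
have gapM (u : 'rV_n) : 0 <= pM * dotv u u - bform A u u.
  by rewrite subr_ge0; case/andP: (rayleighA u).
rewrite -subr_ge0.
have -> : m * dotv v v - bform (Qmat A b k1 k2 k3) v v =
    b * k2 / 2 * (bform A (x + y) (x + y) - p1 * dotv (x + y) (x + y))
  + (b * k2 * p1 - k3) / 2 * dotv (x + y) (x + y)
  + b * k2 / 2 * bform A (x - z) (x - z)
  + b * k1 / 2 * dotv (y - z) (y - z)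
  + k2 * dotv (x *m A - p1 *: x) (x *m A - p1 *: x)
  + k2 * (2 * p1 - b) * (bform A x x - p1 * dotv x x)
  + k2 * (1 + b / 2) * (pM * dotv y y - bform A y y)
  + (2 - k2 * b) / 2 * (bform A z z - p1 * dotv z z)
  + (m - k2 * p1 * (b - p1) + k3 / 2) * dotv x x
  + (m - (k2 * pM * (1 + b / 2) - b * k1 / 2) + k3 / 2) * dotv y y
  + (m - (p1 * (b * k2 / 2 - 1) + b * k1 / 2)) * dotv z z.
  rewrite -[v]hsubmxK -[lsubmx v]hsubmxK bform_Qmat // !tr_row_mx !mul_row_col.
  rewrite bformDD // bformBB // dotvDD !dotvBB !linearZ /= -scalemxAl !mx11D !mx11Z.
  by field.
have formA_ge0 (u : 'rV_n) : 0 <= bform A u u.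
  by case/andP: (rayleighA u) => + _; apply: le_trans; rewrite mulr_ge0 ?dotv_ge0.
by rewrite !addr_ge0 // !mulr_ge0 ?gap ?gapM ?formA_ge0 ?dotv_ge0 ?invr_ge0 ?subr_ge0
  // addr_ge0 ?subr_ge0 ?divr_ge0.
Qed.
End QmatBound.

Lemma eigenvalue_le_bform (R : realFieldType) n (B : 'M[R]_n) m :
  (forall v : 'rV_n, bform B v v <= m * dotv v v) ->
  forall l, eigenvalue B l -> l <= m.
Proof.
move=> Bm l /eigenvalueP[v vB v_neq0].
by have := Bm v; rewrite vB -scalemxAl mx11Z ler_pM2r // dotv_gt0.
Qed.

Definition Qbound (R : realFieldType) (p1 pM b k1 k2 : R) : R :=
  Num.max (k2 * p1 * (b - p1))
    (Num.max (k2 * pM * (1 + b / 2) - b * k1 / 2)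
             (p1 * (b * k2 / 2 - 1) + b * k1 / 2)).

Lemma Qbound_lt0 (R : realFieldType) (p1 pM b k1 k2 : R) :
  0 < p1 -> 0 < pM -> 0 < b -> 0 < k1 -> 0 < k2 -> b < p1 ->
  k2 < b * k1 / (pM * (2 + b)) -> k2 < 2 / b - k1 / p1 ->
  Qbound p1 pM b k1 k2 < 0.
Proof.
move=> p1_gt0 pM_gt0 b_gt0 k1_gt0 k2_gt0 b_lt_p1 k2_lt1 k2_lt2.
have lt1 : k2 * (pM * (2 + b)) < b * k1.
  by rewrite -ltr_pdivlMr // mulr_gt0 // addr_gt0.
have lt2 : k2 * (b * p1) < 2 * p1 - b * k1.
  have -> : 2 * p1 - b * k1 = (2 / b - k1 / p1) * (b * p1).
    by field; rewrite !gt_eqF.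
  by rewrite ltr_pM2r ?mulr_gt0.
rewrite /Qbound !gt_max; apply/and3P; split.
- by rewrite pmulr_rlt0 ?subr_lt0 // mulr_gt0.
- by lra.
- by lra.
Qed.

Theorem lemma2 (R : rcfType) (M : nat) (A : 'M[R]_M) (phi1 phiM : R)
  (b kn1 kn2 kn3 : R) :
  A^T = A -> posdef A ->
  eigenvalue A phi1 -> eigenvalue A phiM ->
  (forall a, eigenvalue A a -> phi1 <= a <= phiM) ->
  0 < phi1 ->
  0 < b -> 0 < kn1 -> 0 < kn2 -> 0 < kn3 ->
  kn2 < kn1 / Num.sqrt phiM ->
  b < phi1 ->
  kn1 < 2 * phi1 / b ->
  kn2 < Num.min (b * kn1 / (phiM * (2 + b))) (2 / b - kn1 / phi1) ->
  kn3 < b * kn2 * phi1 / 2 ->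
  forall l : R, eigenvalue (Qmat A b kn1 kn2 kn3) l ->
    l < 0 /\
    l <= Num.max (kn2 * phi1 * (b - phi1))
           (Num.max (kn2 * phiM * (1 + b / 2) - b * kn1 / 2)
                    (phi1 * (b * kn2 / 2 - 1) + b * kn1 / 2)).
Proof.
move=> sA _ eig_phi1 _ eigA phi1_gt0 b_gt0 kn1_gt0 kn2_gt0 kn3_gt0 _ b_lt_phi1 _.
rewrite lt_min => /andP[kn2_lt1 kn2_lt2] kn3_lt l eig_l.
have phiM_gt0 : 0 < phiM by case/andP: (eigA _ eig_phi1) => _; apply: lt_le_trans.
have Qb_lt0 := Qbound_lt0 phi1_gt0 phiM_gt0 b_gt0 kn1_gt0 kn2_gt0 b_lt_phi1 kn2_lt1 kn2_lt2.
have kn2b_le2 : kn2 * b <= 2.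
  apply: ltW; rewrite -ltr_pdivlMr //; apply: lt_le_trans kn2_lt2 _.
  by rewrite gerDl oppr_le0 divr_ge0 ?ltW.
have l_le_Qb : l <= Qbound phi1 phiM b kn1 kn2.
  apply: eigenvalue_le_bform l eig_l => v.
  have bkp_gt0 : 0 < b * kn2 * phi1 by rewrite !mulr_gt0.
  apply: (bform_Qmat_le sA (rayleigh_bounds sA eigA) (ltW b_gt0) (ltW kn1_gt0)
    (ltW kn2_gt0) (ltW kn3_gt0) (ltW phi1_gt0) _ _ kn2b_le2);
    rewrite /Qbound ?le_max ?lexx ?orbT //; lra.
by split=> //; apply: le_lt_trans Qb_lt0.
Qed.
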